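(* Let $g=\theta\circ\lambda:\mathbf{S}^n\to[-\infty,\infty]$ be a spectral function with symmetric $\theta:\mathbb{R}^n\to[-\infty,\infty]$, and assume $\theta$ is locally Lipschitz continuous relative to its domain. Then for any $X\in\mathbf{S}^n$ with $g(X)$ finite and any $v\in\mathbb{R}^n$, $$\mathrm{d}\theta(\lambda(X))(v)=\mathrm{d}g\big(\mathrm{Diag}(\lambda(X))\big)(\mathrm{Diag}(v)).$$ In particular, if $C\subset\mathbf{S}^n$ is a spectral set with $C=\{X:\lambda(X)\in\Theta\}$ for a symmetric set $\Theta\subset\mathbb{R}^n$, then for every $X\in C$, $$T_\Theta(\lambda(X))=\{v\in\mathbb{R}^n:\ \mathrm{Diag}(v)\in T_C(\mathrm{Diag}(\lambda(X)))\}.$$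
   Context: $\mathbf{S}^n$: real symmetric $n\times n$ matrices with trace inner product and Frobenius norm. $\lambda(X)$: eigenvalues of $X$ in nonincreasing order; $\mathrm{Diag}(x)$: diagonal matrix with diagonal $x$. $\theta$ is symmetric if $\theta(Px)=\theta(x)$ for all permutation matrices $P$; a set $\Theta$ is symmetric if its indicator is symmetric; $g$ is spectral if $g(U^\top XU)=g(X)$ for all orthogonal $U$ (then $g=\theta\circ\lambda$ with $\theta(x)=g(\mathrm{Diag}(x))$); $C$ is a spectral set if its indicator is spectral. A function $f$ is locally Lipschitz continuous relative to a set $D\subset\mathrm{dom}\,f$ around $\bar x\in D$ ($f(\bar x)$ finite) if there exist $\ell\ge0$ and a neighborhood $V$ of $\bar x$ with $|f(x)-f(y)|\le\ell\|x-y\|$ for $x,y\in V\cap D$; it is locally Lipschitz continuous relative to its domain if this holds around every point of $\mathrm{dom}\,f$ with $D=\mathrm{dom}\,f$. Subderivative: $\mathrm{d}f(\bar x)(\bar w)=\liminf_{t\downarrow0,\,w\to\bar w}\frac{f(\bar x+tw)-f(\bar x)}{t}$. Tangent cone: $T_C(\bar x)=\{w:\exists t_k\downarrow0,\ w_k\to w,\ \bar x+t_kw_k\in C\}$. *)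

From HB Require Import structures.
From mathcomp Require Import all_boot all_order all_fingroup all_algebra.
From mathcomp Require Import all_classical all_reals all_analysis.
Set Implicit Arguments. Unset Strict Implicit. Unset Printing Implicit Defensive.
Import Order.TTheory GRing.Theory Num.Theory.
Import numFieldNormedType.Exports.
Local Open Scope classical_set_scope.
Local Open Scope ring_scope.

Section Spectral.
Variable R : realType.

Definition symmx (n : nat) : set 'M[R]_n := [set X | X^T = X].

Definition is_sorted_eigvals (n : nat) (X : 'M[R]_n) (x : 'rV[R]_n) : Prop :=
  (forall i j : 'I_n, (i <= j)%N -> x 0 j <= x 0 i) /\
  char_poly X = \prod_(i < n) ('X - (x 0 i)%:P).

(* lambda(X): the eigenvalues of X in nonincreasing order (well defined for
   X in S^n; an arbitrary value (0) otherwise). *)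
Definition lam (n : nat) (X : 'M[R]_n) : 'rV[R]_n :=
  xget 0 (is_sorted_eigvals X).

Definition enorm (n : nat) (x : 'rV[R]_n) : R :=
  Num.sqrt (\sum_(i < n) x 0 i ^+ 2).

Definition sym_fun (n : nat) (U : Type) (th : 'rV[R]_n -> U) : Prop :=
  forall (s : 'S_n) (x : 'rV[R]_n), th (col_perm s x) = th x.

Definition sym_set (n : nat) (Th : set 'rV[R]_n) : Prop :=
  sym_fun (fun x => `[< Th x >]).

Definition edom (V : Type) (f : V -> \bar R) : set V := [set x | (f x < +oo)%E].

Definition loc_lip_rel (n : nat) (f : 'rV[R]_n -> \bar R) (D : set 'rV[R]_n)
    (xb : 'rV[R]_n) : Prop :=
  f xb \is a fin_num /\
  exists l : R, 0 <= l /\ exists V : set 'rV[R]_n, nbhs xb V /\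
    forall x y, V x -> D x -> V y -> D y ->
      (`|f x - f y| <= (l * enorm (x - y))%:E)%E.

Definition loc_lip_dom (n : nat) (f : 'rV[R]_n -> \bar R) : Prop :=
  forall xb, edom f xb -> loc_lip_rel f (edom f) xb.

(* Subderivative, with directions w restricted to the ambient space S:
   df(xb)(wb) = liminf_{t \downarrow 0, w -> wb, w in S} (f(xb + t w) - f(xb)) / t,
   the liminf being written out as sup over neighbourhoods of inf. *)
Definition subderiv (V : normedModType R) (S : set V) (f : V -> \bar R)
    (xb wb : V) : \bar R :=
  ereal_sup [set y | exists d e : R, 0 < d /\ 0 < e /\
    y = ereal_inf [set z | exists (t : R) (w : V),
          0 < t < d /\ ball wb e w /\ S w /\
          z = ((f (xb + t *: w)%R - f xb) * (t^-1)%:E)%E]].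

Definition tcone (V : normedModType R) (C : set V) (xb : V) : set V :=
  [set w | exists (t : nat -> R) (ws : nat -> V),
     (forall k, 0 < t k) /\ t @ \oo --> 0 /\ ws @ \oo --> w /\
     (forall k, C (xb + t k *: ws k))].

End Spectral.

(* Weyl's inequality |lambda_k(M + E) - lambda_k(M)| <= 2 n max|E_ij|, proved by
   counting eigenvalues above a threshold through the dimension of subspaces on
   which the quadratic form is large (Courant-Fischer), shows that for a
   symmetric W close to Diag(v) and t > 0 the spectrum of Diag(l) + t W is a
   permutation of l + t u with u close to v.  As theta (resp. Theta) is
   permutation invariant, every difference quotient (resp. tangent sequence)
   along symmetric directions near Diag(v) is one along directions near v, and
   conversely diagonal directions give back the quotients of theta. *)

From HB Require Import structures.
From mathcomp Require Import all_boot all_order all_fingroup all_algebra.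
From mathcomp Require Import all_classical all_reals all_analysis.
From mathcomp Require Import complex spectral.
From mathcomp Require Import ring lra.
Set Implicit Arguments. Unset Strict Implicit. Unset Printing Implicit Defensive.
Import Order.TTheory GRing.Theory Num.Theory.
Import numFieldNormedType.Exports.
Local Open Scope ring_scope.

Lemma char_poly_similar (F : fieldType) n (P A : 'M[F]_n) : P \in unitmx ->
  char_poly (invmx P *m A *m P) = char_poly A.
Proof.
move=> Pu; rewrite /char_poly /char_poly_mx.
set Q := map_mx (@polyC F) (invmx P); set Pp := map_mx (@polyC F) P.
have QP : Q *m Pp = 1%:M by rewrite -map_mxM mulVmx // map_mx1.
have -> : 'X%:M - map_mx (@polyC F) (invmx P *m A *m P) =
          Q *m ('X%:M - map_mx (@polyC F) A) *m Pp.
  rewrite !map_mxM -/Q -/Pp mulmxBr mulmxBl scalar_mxC.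
  by rewrite -(mulmxA _ Q Pp) QP mulmx1.
by rewrite !det_mulmx mulrC mulrA [\det Pp * _]mulrC -det_mulmx QP det1 mul1r.
Qed.

Section UnitaryDiagonalization.
Variable R : rcfType.
Local Notation rC := (real_complex R).
Local Open Scope sesquilinear_scope.

Lemma symmetric_unitary_diag n (M : 'M[R]_n) : M^T = M ->
  exists P : 'M[R[i]]_n, exists r : 'rV[R]_n, P \is unitarymx /\
    map_mx rC M = invmx P *m diag_mx (map_mx rC r) *m P.
Proof.
move=> MT.
have MH : map_mx rC M \is hermsymmx.
  apply/is_hermitianmxP; rewrite expr0 scale1r; apply/matrixP => i j.
  by rewrite !mxE -[in LHS]MT mxE; symmetry; exact: conjc_real.
have /orthomx_spectralP -> := hermitian_normalmx MH.
exists (spectralmx (map_mx rC M)).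
exists (map_mx (@complex.Re R) (spectral_diag (map_mx rC M))).
split; first exact: spectral_unitarymx.
congr (_ *m diag_mx _ *m _); apply/matrixP => i j; rewrite !mxE RRe_real //.
by have /mxOverP := hermitian_spectral_diag_real MH; apply.
Qed.

Lemma char_poly_unitary_diag n (M : 'M[R]_n) (P : 'M[R[i]]_n) (r : 'rV[R]_n) :
  P \is unitarymx -> map_mx rC M = invmx P *m diag_mx (map_mx rC r) *m P ->
  char_poly M = \prod_(i < n) ('X - (r 0 i)%:P).
Proof.
move=> Pu Meq; apply: (@map_poly_inj _ _ rC).
rewrite map_char_poly Meq char_poly_similar ?unitarymx_unit //.
rewrite char_poly_trig ?diag_mx_is_trig // rmorph_prod.
by apply: eq_bigr => i _; rewrite !mxE eqxx mulr1n /= map_polyXsubC.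
Qed.

End UnitaryDiagonalization.

Section QuadraticForm.
Variable C : numClosedFieldType.
Local Open Scope sesquilinear_scope.

Definition qform n (A : 'M[C]_n) (x : 'rV[C]_n) : C := (x *m A *m x^t*) 0 0.

Lemma qformE n (A : 'M[C]_n) x :
  qform A x = \sum_j (\sum_i x 0 i * A i j) * (x 0 j)^*.
Proof.
by rewrite /qform !mxE; apply: eq_bigr => j _; rewrite !mxE; congr (_ * _).
Qed.

Lemma qform1E n (x : 'rV[C]_n) : qform 1%:M x = \sum_i x 0 i * (x 0 i)^*.
Proof. by rewrite /qform mulmx1 !mxE; apply: eq_bigr => j _; rewrite !mxE. Qed.

Lemma qformD n (A B : 'M[C]_n) x : qform (A + B) x = qform A x + qform B x.
Proof. by rewrite /qform mulmxDr mulmxDl mxE. Qed.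

Lemma qform_unitary_diag n (P : 'M[C]_n) (d b : 'rV[C]_n) : P \is unitarymx ->
  qform (invmx P *m diag_mx d *m P) (b *m P) = \sum_i d 0 i * (b 0 i * (b 0 i)^*).
Proof.
move=> Pu; rewrite /qform invmx_unitary // trmx_mul map_mxM !mulmxA !mulmxtVK //.
rewrite mxE; apply: eq_bigr => j _; rewrite mul_mx_diag !mxE.
by rewrite mulrAC mulrC mulrA.
Qed.

Lemma qform1_unitary n (P : 'M[C]_n) (b : 'rV[C]_n) : P \is unitarymx ->
  qform 1%:M (b *m P) = \sum_i b 0 i * (b 0 i)^*.
Proof.
by move=> Pu; rewrite -qform1E /qform !mulmx1 trmx_mul map_mxM mulmxA mulmxtVK.
Qed.

Lemma rowsub_unitarymx m n (f : 'I_m -> 'I_n) (P : 'M[C]_n) :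
  injective f -> P \is unitarymx -> rowsub f P \is unitarymx.
Proof.
move=> f_inj /unitarymxP Pu; apply/unitarymxP/matrixP => i j.
have /matrixP/(_ (f i) (f j)) := Pu; rewrite !mxE /= (inj_eq f_inj) => <-.
by apply: eq_bigr => k _; rewrite !mxE.
Qed.

Lemma mul_rowsub_supp m n (f : 'I_m -> 'I_n) (P : 'M[C]_n) (a : 'rV[C]_m) :
  a *m rowsub f P = (a *m rowsub f 1%:M) *m P /\
  forall i, (forall k, f k != i) -> (a *m rowsub f 1%:M) 0 i = 0.
Proof.
split; first by rewrite -mulmxA mul_rowsub_mx mul1mx.
by move=> i fi; rewrite mxE big1 // => k _; rewrite !mxE (negbTE (fi k)) mulr0.
Qed.

End QuadraticForm.

Section RealQuadraticForm.
Variable R : rcfType.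
Local Notation rC := (real_complex R).
Local Open Scope sesquilinear_scope.

Lemma real_complex_real (a : R) : rC a \is Num.real.
Proof. by apply/CrealP; exact: conjc_real. Qed.

Lemma conjC_real_complex (a : R) : (rC a)^* = rC a.
Proof. exact/CrealP/real_complex_real. Qed.

Lemma qform_real_sym n (N : 'M[R]_n) x : N^T = N -> qform (map_mx rC N) x \is Num.real.
Proof.
move=> NT; apply/CrealP; rewrite qformE rmorph_sum /=.
transitivity (\sum_j \sum_i (x 0 i)^* * rC (N i j) * x 0 j).
  apply: eq_bigr => j _; rewrite rmorphM /= conjCK rmorph_sum /= big_distrl.
  by apply: eq_bigr => i _; rewrite !rmorphM /= mxE conjC_real_complex.
rewrite exchange_big /=; apply: eq_bigr => k _; rewrite big_distrl.
apply: eq_bigr => i _; rewrite mxE -[in N k i]NT mxE.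
by rewrite [RHS]mulrC mulrA mulrAC.
Qed.

Lemma norm_qform_le n (E : 'M[R]_n) (e : R) x : (forall i j, `|E i j| <= e) ->
  `|qform (map_mx rC E) x| <= rC (2 * n%:R * e) * qform 1%:M x.
Proof.
move=> hE; rewrite qformE qform1E.
apply: le_trans (ler_norm_sum _ _ _) _.
apply: (@le_trans _ _ (\sum_j \sum_i rC e * (`|x 0 i| ^+ 2 + `|x 0 j| ^+ 2))).
  apply: ler_sum => j _; rewrite normrM norm_conjC.
  apply: le_trans (ler_wpM2r (normr_ge0 _) (ler_norm_sum _ _ _)) _.
  rewrite big_distrl; apply: ler_sum => i _ /=; rewrite normrM mxE.
  have he : `|rC (E i j)| <= rC e.
    by rewrite real_ler_norml ?real_complex_real // -rmorphN !lecR -ler_norml.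
  have e0 : 0 <= rC e := le_trans (normr_ge0 _) he.
  apply: (@le_trans _ _ (`|x 0 i| * rC e * `|x 0 j|)).
    by rewrite ler_wpM2r // ler_wpM2l.
  rewrite mulrAC mulrC ler_wpM2l //.
  (* [|a| |b| <= max(|a|, |b|)^2 <= |a|^2 + |b|^2] *)
  case: (real_leP (normr_real (x 0 i)) (normr_real (x 0 j))) => h.
    apply: (@le_trans _ _ (`|x 0 j| ^+ 2)); last by rewrite lerDr exprn_ge0.
    by rewrite expr2 ler_wpM2r.
  apply: (@le_trans _ _ (`|x 0 i| ^+ 2)); last by rewrite lerDl exprn_ge0.
  by rewrite expr2 ler_wpM2l // ltW.
rewrite le_eqVlt; apply/orP; left; apply/eqP.
under eq_bigr do under eq_bigr do rewrite !normCK.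
under eq_bigr do rewrite -mulr_sumr big_split /= sumr_const card_ord.
rewrite -mulr_sumr big_split /= sumr_const card_ord sumrMnl.
rewrite -mulr_natr !rmorphM /= mul1r !rmorph_nat.
ring.
Qed.

Lemma qform_sym_ge n (E : 'M[R]_n) (e : R) x : E^T = E ->
  (forall i j, `|E i j| <= e) ->
  - rC (2 * n%:R * e) * qform 1%:M x <= qform (map_mx rC E) x.
Proof.
move=> ET hE; rewrite mulNr.
exact: real_lerNnormlW (qform_real_sym x ET) (norm_qform_le x hE).
Qed.

Lemma row_neq0_entry n (b : 'rV[R[i]]_n) : b != 0 -> exists j, b 0 j != 0.
Proof.
move=> b0; apply/existsP; apply: contraR b0 => /existsPn b0.
by apply/eqP/rowP => j; rewrite mxE; apply/eqP/negbNE/b0.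
Qed.

Section EigenvalueCount.
Variables (n : nat) (P : 'M[R[i]]_n) (r : 'rV[R]_n) (c : R).
Hypothesis Pu : P \is unitarymx.
Local Notation M := (invmx P *m diag_mx (map_mx rC r) *m P).
Local Notation above := [pred i | c < r 0 i].

(* Min-max in counting form: [#|above|] is the largest dimension of a
   subspace on which the form of [M] exceeds [c] times the squared norm. *)
Lemma qform_gt_eigenrows : exists U : 'M[R[i]]_(#|above|, n),
  \rank U = #|above| /\
  forall a, a *m U != 0 -> rC c * qform 1%:M (a *m U) < qform M (a *m U).
Proof.
exists (rowsub (@enum_val _ above) P); split.
  exact/mxrank_unitary/rowsub_unitarymx/Pu/enum_val_inj.
move=> a; have [-> b_supp] := mul_rowsub_supp (@enum_val _ above) P a.
set b := a *m _ => bP0.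
have bS i : ~~ (c < r 0 i) -> b 0 i = 0.
  by move=> ci; apply: b_supp => k; apply: contra ci => /eqP <-; exact: (enum_valP k).
clearbody b; clear b_supp.
have [j bj0] : exists j, b 0 j != 0.
  by apply: row_neq0_entry; apply: contra bP0 => /eqP ->; rewrite mul0mx.
have cj : c < r 0 j by apply: contraR bj0 => /bS ->.
rewrite qform_unitary_diag // qform1_unitary // mulr_sumr.
rewrite (bigD1 j) //= [X in _ < X](bigD1 j) //=; apply: ltr_leD.
  by rewrite mxE ltr_pM2r ?ltcR // mul_conjC_gt0.
apply: ler_sum => i _; case: (boolP (c < r 0 i)) => ci.
  by rewrite mxE ler_wpM2r ?mul_conjC_ge0 // lecR ltW.
by rewrite bS // mul0r !mulr0.
Qed.

Lemma rank_qform_gt m (U : 'M[R[i]]_(m, n)) :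
  (forall a, a *m U != 0 -> rC c * qform 1%:M (a *m U) < qform M (a *m U)) ->
  (\rank U <= #|above|)%N.
Proof.
move=> hU; set V := rowsub (@enum_val _ [predC above]) P.
have rV : \rank V = #|[predC above]|.
  exact/mxrank_unitary/rowsub_unitarymx/Pu/enum_val_inj.
(* [V] spans the eigenvectors for eigenvalues [<= c], where the form of [M]
   is at most [c] times the squared norm. *)
have capUV0 : \rank (U :&: V)%MS = 0%N.
  apply/eqP; rewrite mxrank_eq0 -submx0; apply/rV_subP => x.
  rewrite sub_capmx => /andP[/submxP[a ->] /submxP[a' aV]].
  rewrite submx0; apply: contraT => aU0.
  have := hU a aU0; rewrite aV.
  have [-> b_supp] := mul_rowsub_supp (@enum_val _ [predC above]) P a'.
  set b := a' *m _ in b_supp *.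
  have bS i : c < r 0 i -> b 0 i = 0.
    move=> ci; apply: b_supp => k; apply/eqP => ki.
    by have := enum_valP k; rewrite ki inE /= inE ci.
  clearbody b; clear b_supp.
  rewrite qform_unitary_diag // qform1_unitary // mulr_sumr => lt_cM.
  suff : \sum_i (map_mx rC r) 0 i * (b 0 i * (b 0 i)^*) <=
         \sum_i rC c * (b 0 i * (b 0 i)^*) by move/(lt_le_trans lt_cM); rewrite ltxx.
  apply: ler_sum => i _; case: (boolP (c < r 0 i)) => ci.
    by rewrite bS // mul0r !mulr0.
  by rewrite mxE ler_wpM2r ?mul_conjC_ge0 // lecR leNgt.
have := mxrank_sum_cap U V; rewrite capUV0 addn0 rV => rUV.
rewrite -(leq_add2r #|[predC above]|) -rUV cardC card_ord.
exact: rank_leq_col.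
Qed.

End EigenvalueCount.
End RealQuadraticForm.

Section SortedEigenvalues.
Variable R : realType.

Definition row_seq n (x : 'rV[R]_n) := [seq x 0 i | i <- enum 'I_n].

Lemma size_row_seq n (x : 'rV[R]_n) : size (row_seq x) = n.
Proof. by rewrite size_map size_enum_ord. Qed.

Lemma nth_row_seq n (x : 'rV[R]_n) (i : 'I_n) : nth 0 (row_seq x) i = x 0 i.
Proof. by rewrite (nth_map i) ?size_enum_ord // nth_ord_enum. Qed.

Lemma big_row_seq n (x : 'rV[R]_n) (F : R -> {poly R}) :
  \prod_(i < n) F (x 0 i) = \prod_(a <- row_seq x) F a.
Proof. by rewrite big_map big_enum. Qed.

Lemma row_seq_inj n : injective (@row_seq n).
Proof. by move=> x y xy; apply/rowP => i; rewrite -!nth_row_seq xy. Qed.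

Lemma sorted_row_seq n (x : 'rV[R]_n) :
  (forall i j : 'I_n, (i <= j)%N -> x 0 j <= x 0 i) -> sorted >=%R (row_seq x).
Proof.
move=> x_sorted; apply/(sortedP 0) => i; rewrite size_row_seq => i1n.
have ilt : (i < n)%N by apply: ltn_trans i1n.
have := x_sorted (Ordinal ilt) (Ordinal i1n) (leqnSn _).
by rewrite -(nth_row_seq x (Ordinal ilt)) -(nth_row_seq x (Ordinal i1n)).
Qed.

Lemma sorted_eigvals_uniq n (M : 'M[R]_n) x y :
  is_sorted_eigvals M x -> is_sorted_eigvals M y -> x = y.
Proof.
move=> [sx cx] [sy cy]; apply: row_seq_inj.
apply: (sorted_eq ge_trans ge_anti); try exact: sorted_row_seq.
by apply: prod_XsubC_eq; rewrite -!big_row_seq -cx -cy.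
Qed.

Lemma sorted_eigvals_perm n (M : 'M[R]_n) x (z : 'rV[R]_n) :
  is_sorted_eigvals M x -> char_poly M = \prod_(i < n) ('X - (z 0 i)%:P) ->
  exists s : 'S_n, x = col_perm s z.
Proof.
move=> [_ cx] cz.
have : perm_eq (row_seq x) [tuple z 0 i | i < n].
  apply: prod_XsubC_eq; rewrite -big_row_seq -cx cz big_tuple.
  by apply: eq_bigr => i _; rewrite tnth_mktuple.
case/tuple_permP => s xs; exists s; apply/rowP => j.
have := congr1 (fun q => nth 0 q j) xs; rewrite nth_row_seq /= => ->.
by rewrite !mxE (nth_map j) ?size_enum_ord // nth_ord_enum tnth_mktuple.
Qed.

Lemma sorted_eigvals_exists n (M : 'M[R]_n) (r : 'rV[R]_n) :
  char_poly M = \prod_(i < n) ('X - (r 0 i)%:P) -> exists x, is_sorted_eigvals M x.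
Proof.
move=> cr; set s := sort >=%R (row_seq r).
have s_sorted : sorted >=%R s by apply: sort_sorted; exact: ge_total.
have sz : size s = n by rewrite size_sort size_row_seq.
exists (\row_i nth 0 s i); split.
  move=> i j ij; rewrite !mxE.
  by apply: (sorted_leq_nth ge_trans lexx) => //; rewrite inE sz.
rewrite cr (big_row_seq r (fun a => 'X - a%:P)).
rewrite -(perm_big _ (permEl (perm_sort >=%R _))) -/s (big_nth 0) sz big_mkord.
by apply: eq_bigr => i _; rewrite mxE.
Qed.

Lemma lam_sorted_eigvals n (X : 'M[R]_n) : symmx X -> is_sorted_eigvals X (lam X).
Proof.
move=> XT; have [P [r [Pu Xeq]]] := symmetric_unitary_diag XT.
exact: (xgetPex 0 (sorted_eigvals_exists (char_poly_unitary_diag Pu Xeq))).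
Qed.

End SortedEigenvalues.

Section Weyl.
Variable R : realType.
Local Notation rC := (real_complex R).

Lemma card_gt_col_perm n (r : 'rV[R]_n) (s : 'S_n) (c : R) :
  #|[pred i | c < col_perm s r 0 i]| = #|[pred i | c < r 0 i]|.
Proof.
rewrite -!sum1_card [RHS](reindex_inj (@perm_inj _ s)) /=.
by apply: eq_bigl => i; rewrite !inE mxE.
Qed.

Lemma widen_ord_inj m n (mn : (m <= n)%N) : injective (widen_ord mn).
Proof. by move=> a b /(congr1 val) /= /val_inj. Qed.

Lemma sorted_gtE n (x : 'rV[R]_n) (c : R) (k : 'I_n) :
  (forall i j : 'I_n, (i <= j)%N -> x 0 j <= x 0 i) ->
  (c < x 0 k) = (k < #|[pred i | (c < x 0 i)%R]|)%N.
Proof.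
move=> x_sorted; apply/idP/idP => [ck | ].
  have kn : (k.+1 <= n)%N := ltn_ord k.
  have : widen_ord kn @: [set: 'I_k.+1] \subset [pred i | c < x 0 i].
    apply/fintype.subsetP => _ /imsetP[i _ ->]; rewrite inE /=.
    by apply: lt_le_trans ck _; apply: x_sorted; rewrite /= -ltnS.
  by move/subset_leq_card; rewrite card_imset ?cardsT ?card_ord //; exact: widen_ord_inj.
apply: contraLR; rewrite -leNgt -leqNgt => xkc.
have kn : (k <= n)%N := ltnW (ltn_ord k).
have : [pred i | c < x 0 i] \subset widen_ord kn @: [set: 'I_k].
  apply/fintype.subsetP => i; rewrite inE /= => ci.
  have ik : (i < k)%N.
    rewrite ltnNge; apply/negP => ki.
    by have := lt_le_trans ci (le_trans (x_sorted _ _ ki) xkc); rewrite ltxx.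
  by apply/imsetP; exists (Ordinal ik); [rewrite inE | apply: val_inj].
move/subset_leq_card/leq_trans; apply.
by rewrite card_imset ?cardsT ?card_ord //; exact: widen_ord_inj.
Qed.

Lemma weyl_lower n (M E : 'M[R]_n) x y e : M^T = M -> E^T = E ->
  (forall i j, `|E i j| <= e) ->
  is_sorted_eigvals M x -> is_sorted_eigvals (M + E) y ->
  forall k, x 0 k - 2 * n%:R * e <= y 0 k.
Proof.
move=> MT ET hE sx sy k.
have MET : (M + E)^T = M + E by rewrite raddfD /= MT ET.
have [P [r [Pu Meq]]] := symmetric_unitary_diag MT.
have [P' [r' [Pu' Meq']]] := symmetric_unitary_diag MET.
have [s x_perm] := sorted_eigvals_perm sx (char_poly_unitary_diag Pu Meq).
have [s' y_perm] := sorted_eigvals_perm sy (char_poly_unitary_diag Pu' Meq').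
set d := 2 * n%:R * e; rewrite leNgt; apply/negP => lt_yx.
(* Compare the numbers of eigenvalues above [c] and above [c - d], for a
   threshold [c] strictly between [y k + d] and [x k]. *)
set c := (y 0 k + d + x 0 k) / 2.
have [U [rU hU]] := qform_gt_eigenrows r c Pu.
have hU' a : a *m U != 0 -> rC (c - d) * qform 1%:M (a *m U) <
    qform (invmx P' *m diag_mx (map_mx rC r') *m P') (a *m U).
  move=> aU0; rewrite -Meq' map_mxD qformD Meq rmorphB mulrBl.
  by apply: ltr_leD (hU a aU0) _; rewrite -mulNr; exact: qform_sym_ge.
have := rank_qform_gt Pu' hU'.
rewrite rU -(card_gt_col_perm r s) -(card_gt_col_perm r' s') -x_perm -y_perm.
have [x_sorted _] := sx; have [y_sorted _] := sy.
have : (k < #|[pred i | (c < x 0 i)%R]|)%N.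
  by rewrite -(sorted_gtE c k x_sorted) /c; lra.
move=> /leq_trans le_k /le_k; rewrite -(sorted_gtE (c - d) k y_sorted) /c; lra.
Qed.

Lemma weyl n (M E : 'M[R]_n) x y e : M^T = M -> E^T = E ->
  (forall i j, `|E i j| <= e) ->
  is_sorted_eigvals M x -> is_sorted_eigvals (M + E) y ->
  forall k, `|y 0 k - x 0 k| <= 2 * n%:R * e.
Proof.
move=> MT ET hE sx sy k.
have MET : (M + E)^T = M + E by rewrite raddfD /= MT ET.
have NET : (- E)^T = - E by rewrite raddfN /= ET.
have hNE i j : `|(- E) i j| <= e by rewrite mxE normrN.
have sx' : is_sorted_eigvals (M + E + - E) x by rewrite addrK.
have := weyl_lower MT ET hE sx sy k; have := weyl_lower MET NET hNE sy sx' k.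
by rewrite ler_distl; lra.
Qed.

End Weyl.

Section DiagonalPerturbation.
Variable R : realType.

Lemma char_poly_diag_mx n (z : 'rV[R]_n) :
  char_poly (diag_mx z) = \prod_(i < n) ('X - (z 0 i)%:P).
Proof.
rewrite char_poly_trig ?diag_mx_is_trig //.
by apply: eq_bigr => i _; rewrite mxE eqxx mulr1n.
Qed.

Lemma lam_diag_mx_add n (z : 'rV[R]_n) (E : 'M[R]_n) e : E^T = E ->
  (forall i j, `|E i j| <= e) ->
  exists s : 'S_n, forall j,
    `|col_perm s (lam (diag_mx z + E)) 0 j - z 0 j| <= 2 * n%:R * e.
Proof.
move=> ET hE; have [x sx] := sorted_eigvals_exists (char_poly_diag_mx z).
have [s xz] := sorted_eigvals_perm sx (char_poly_diag_mx z).
have zET : symmx (diag_mx z + E) by rewrite /symmx /= raddfD /= tr_diag_mx ET.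
exists s^-1%g => j; rewrite mxE.
have := weyl (tr_diag_mx z) ET hE sx (lam_sorted_eigvals zET) (s^-1%g j).
by rewrite xz mxE permKV.
Qed.

Lemma lam_diag_mx n (z : 'rV[R]_n) : exists s : 'S_n, col_perm s (lam (diag_mx z)) = z.
Proof.
have E0 i j : `|(0 : 'M[R]_n) i j| <= 0 by rewrite mxE normr0.
have [s hs] := lam_diag_mx_add z (trmx0 _ _ _) E0.
exists s; apply/rowP => j; apply/eqP; rewrite -subr_eq0 -normr_le0.
by have := hs j; rewrite addr0 mulr0.
Qed.

Lemma sym_fun_lam_diag_mx n (U : Type) (th : 'rV[R]_n -> U) z :
  sym_fun th -> th (lam (diag_mx z)) = th z.
Proof. by move=> th_sym; have [s zE] := lam_diag_mx z; rewrite -[in RHS]zE th_sym. Qed.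

Lemma normr_mx_entry m n (M : 'M[R]_(m, n)) i j : `|M i j| <= `|M|.
Proof.
rewrite [leRHS]/Num.Def.normr /= mx_normrE.
by apply/bigmax_geP; right => /=; exists (i, j).
Qed.

Lemma normr_mx_le m n (M : 'M[R]_(m, n)) e : 0 <= e ->
  (forall i j, `|M i j| <= e) -> `|M| <= e.
Proof.
move=> e0 hM; rewrite [leLHS]/Num.Def.normr /= mx_normrE.
by apply: bigmax_le => // -[i j] _; exact: hM.
Qed.

Lemma lam_diag_mx_direction n (l v : 'rV[R]_n) (W : 'M[R]_n) (t : R) :
  symmx W -> 0 < t -> exists u, exists s : 'S_n,
    l + t *: u = col_perm s (lam (diag_mx l + t *: W)) /\
    `|v - u| <= 2 * n%:R * `|diag_mx v - W|.
Proof.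
move=> WT t0; set e := `|diag_mx v - W|.
pose E := t *: (W - diag_mx v).
have ET : E^T = E by rewrite /E linearZ /= raddfB /= tr_diag_mx WT.
have hE i j : `|E i j| <= t * e.
  by rewrite /E mxE normrM gtr0_norm // ler_pM2l // /e distrC normr_mx_entry.
have [s hs] := lam_diag_mx_add (l + t *: v) ET hE.
have -> : diag_mx l + t *: W = diag_mx (l + t *: v) + E.
  by rewrite /E linearD linearZ /= scalerBr -addrA [t *: diag_mx v + _]addrC subrK.
set y := col_perm s _ in hs *.
exists (t^-1 *: (y - l)), s; split.
  by rewrite scalerA mulfV ?gt_eqF // scale1r addrC subrK.
apply: normr_mx_le => [|i j]; first by apply: mulr_ge0 => //; exact: normr_ge0.
rewrite (ord1 i).
have -> : (v - t^-1 *: (y - l)) 0 j = t^-1 * ((l + t *: v) 0 j - y 0 j).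
  by rewrite !mxE; field; rewrite gt_eqF.
rewrite normrM gtr0_norm ?invr_gt0 // distrC ler_pdivrMl // mulrCA.
exact: hs.
Qed.

End DiagonalPerturbation.

Local Open Scope classical_set_scope.

Section Variational.
Variable R : realType.

Lemma le_subderiv (V V' : normedModType R) (S : set V) (S' : set V')
    (f : V -> \bar R) (f' : V' -> \bar R) (xb wb : V) (xb' wb' : V') :
  (forall e, 0 < e -> exists2 e', 0 < e' & forall t w', 0 < t ->
     ball wb' e' w' -> S' w' -> exists2 w, ball wb e w /\ S w &
       (f (xb + t *: w)%R - f xb = f' (xb' + t *: w')%R - f' xb')%E) ->
  (subderiv S f xb wb <= subderiv S' f' xb' wb')%E.
Proof.
move=> hS; apply: ge_ereal_sup => _ [d [e [d0 [e0 ->]]]].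
have [e' e'0 he'] := hS e e0.
apply: le_ereal_sup_tmp; exists (ereal_inf [set z | exists (t : R) (w' : V'),
    0 < t < d /\ ball wb' e' w' /\ S' w' /\
    z = ((f' (xb' + t *: w')%R - f' xb') * (t^-1)%:E)%E]).
  by exists d, e'.
apply: ereal_inf_le_tmp => _ [t [w' [td [bw' [Sw' ->]]]]].
have [w [bw Sw] fE] := he' t w' (andP td).1 bw' Sw'.
by exists t, w; rewrite fE.
Qed.

Lemma normr_diag_mx_le n (v : 'rV[R]_n) : `|diag_mx v| <= `|v|.
Proof.
apply: normr_mx_le => // i j; rewrite mxE.
by case: eqP => [->|_]; rewrite ?mulr1n ?normr_mx_entry ?mulr0n ?normr0.
Qed.

Lemma symmx_diag_mx n (v : 'rV[R]_n) : symmx (diag_mx v).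
Proof. exact: tr_diag_mx. Qed.

Lemma sym_set_col_perm n (Th : set 'rV[R]_n) (s : 'S_n) x :
  sym_set Th -> Th (col_perm s x) = Th x.
Proof.
move=> Th_sym; have := Th_sym s x.
by case: asboolP => a; case: asboolP => b // _; apply/propext.
Qed.

Lemma sym_set_lam_diag_mx n (Th : set 'rV[R]_n) z :
  sym_set Th -> Th (lam (diag_mx z)) = Th z.
Proof. by move=> Th_sym; have [s zE] := lam_diag_mx z; rewrite -[in RHS]zE sym_set_col_perm. Qed.

End Variational.

Section SpectralDiag.
Variables (R : realType) (n : nat).
Implicit Types (l v : 'rV[R]_n).

Let K : R := 2 * n%:R + 1.
Let K_gt0 : 0 < K. Proof. by have := ler0n R n; rewrite /K; lra. Qed.

Let small_direction v u (W : 'M[R]_n) e :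
  `|v - u| <= 2 * n%:R * `|diag_mx v - W| -> `|diag_mx v - W| < e / K -> `|v - u| < e.
Proof.
move=> vu; rewrite ltr_pdivlMr // /K => We.
have := normr_ge0 (diag_mx v - W); lra.
Qed.

Lemma subderiv_spectral_diag_mx (theta : 'rV[R]_n -> \bar R) l v : sym_fun theta ->
  subderiv setT theta l v =
  subderiv (@symmx R n) (fun Y => theta (lam Y)) (diag_mx l) (diag_mx v).
Proof.
move=> th_sym; have thD z : theta (lam (diag_mx z)) = theta z.
  exact: sym_fun_lam_diag_mx.
apply/le_anti/andP; split; apply: le_subderiv => e e0.
- exists (e / K); first exact: divr_gt0.
  move=> t W t0; rewrite mx_norm_ball => /= bW WT.
  have [u [s [luE uv]]] := lam_diag_mx_direction l v WT t0.
  exists u; last by rewrite luE th_sym thD.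
  by split => //; rewrite mx_norm_ball; exact: small_direction bW.
- exists e => // t w _; rewrite mx_norm_ball => /= bw _.
  exists (diag_mx w); last by rewrite -linearZ -linearD /= !thD.
  split; last exact: symmx_diag_mx.
  by rewrite mx_norm_ball /ball_ /= -linearB; apply: le_lt_trans (normr_diag_mx_le _) _.
Qed.

Lemma tcone_spectral_diag_mx (Th : set 'rV[R]_n) l : sym_set Th ->
  tcone Th l = [set v | tcone [set Y | symmx Y /\ Th (lam Y)] (diag_mx l) (diag_mx v)].
Proof.
move=> Th_sym; apply/seteqP; split => v /=.
  move=> [t [w [t0 [t_to0 [w_to_v Tw]]]]]; exists t, (diag_mx \o w).
  do 3!split => //.
    apply/cvgrPdist_lt => eps eps0; move/cvgrPdist_lt: w_to_v => /(_ eps eps0).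
    by apply: filterS => k; apply: le_lt_trans; rewrite -linearB normr_diag_mx_le.
  move=> k; rewrite /= -linearZ -linearD sym_set_lam_diag_mx //.
  by split => //; exact: symmx_diag_mx.
move=> [t [W [t0 [t_to0 [W_to_v CW]]]]].
have WT k : symmx (W k).
  have := (CW k).1; rewrite /symmx /= raddfD /= tr_diag_mx linearZ /= => /addrI.
  exact/scalerI/lt0r_neq0/t0.
have /choice [u uP] k : exists u, exists s : 'S_n,
    l + t k *: u = col_perm s (lam (diag_mx l + t k *: W k)) /\
    `|v - u| <= 2 * n%:R * `|diag_mx v - W k|.
  exact: lam_diag_mx_direction.
exists t, u; do 3!split => //.
  apply/cvgrPdist_lt => eps eps0.
  move/cvgrPdist_lt: W_to_v => /(_ (eps / K) (divr_gt0 eps0 K_gt0)).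
  by apply: filterS => k; have [s [_ uv]] := uP k; exact: small_direction.
by move=> k; have [s [-> _]] := uP k; rewrite sym_set_col_perm //; exact: (CW k).2.
Qed.

End SpectralDiag.

Theorem proposition3p2 (R : realType) (n : nat) :
  (forall theta : 'rV[R]_n -> \bar R,
     sym_fun theta -> loc_lip_dom theta ->
     forall X : 'M[R]_n, symmx X -> theta (lam X) \is a fin_num ->
     forall v : 'rV[R]_n,
       subderiv setT theta (lam X) v =
       subderiv (@symmx R n) (fun Y => theta (lam Y))
                (diag_mx (lam X)) (diag_mx v))
  /\
  (forall Theta : set 'rV[R]_n, sym_set Theta ->
     let C := [set Y : 'M[R]_n | symmx Y /\ Theta (lam Y)] in
     forall X : 'M[R]_n, C X ->
       tcone Theta (lam X) = [set v | tcone C (diag_mx (lam X)) (diag_mx v)]).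
Proof.
split=> [theta th_sym _ X _ _ v | Th Th_sym C X _].
  exact: subderiv_spectral_diag_mx.
exact: tcone_spectral_diag_mx.
Qed.
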